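(* Let $x$ be a sequence of length $n$, let $i\in\{1,\ldots,n-1\}$, $y=\tau(x,i)$, and let $r,\ell$ be as defined in the context. Let $R=\{i+2,\ldots,i+r-1\}$ and $L=\{i-\ell+1,\ldots,i-1\}$. (1) If $x[i]<x[i+1]$: (a) for every $j\in R$, $\overrightarrow{PD}_y[j]\in\{\overrightarrow{PD}_x[j],\overrightarrow{PD}_x[j]-1\}$; (b) for every $j\in L$, $\overleftarrow{PD}_y[j]\in\{\overleftarrow{PD}_x[j],\overleftarrow{PD}_x[j]+1\}$. (2) If $x[i]>x[i+1]$: (a) for every $j\in R$, $\overrightarrow{PD}_y[j]\in\{\overrightarrow{PD}_x[j],\overrightarrow{PD}_x[j]+1\}$; (b) for every $j\in L$, $\overleftarrow{PD}_y[j]\in\{\overleftarrow{PD}_x[j],\overleftarrow{PD}_x[j]-1\}$.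
   Context: Sequences are finite sequences of pairwise distinct integers indexed from $1$. For $1\le i\le n-1$, $\tau(x,i)$ is obtained from $x$ by exchanging $x[i]$ and $x[i+1]$. The parent-distance table of $x$ is $\overrightarrow{PD}_x[k]=k-\max\{j<k : x[j]<x[k]\}$ if such $j$ exists and $0$ otherwise; the reverse parent-distance table is $\overleftarrow{PD}_x[k]=\min\{j : k<j\le n,\ x[j]<x[k]\}-k$ if such $j$ exists and $0$ otherwise. Notation: $\overrightarrow{a_x}=\overrightarrow{PD}_x[i]$, $\overrightarrow{b_x}=\overrightarrow{PD}_x[i+1]$, $\overleftarrow{a_x}=\overleftarrow{PD}_x[i+1]$, $\overleftarrow{b_x}=\overleftarrow{PD}_x[i]$. Define $r=\overleftarrow{b_x}$ if $x[i]<x[i+1]$ and $\overleftarrow{b_x}>1$; $r=\overleftarrow{a_x}+1$ if $x[i]>x[i+1]$ and $\overleftarrow{a_x}>0$; $r=n-i+1$ otherwise. Define $\ell=\overrightarrow{a_x}$ if $x[i]<x[i+1]$ and $\overrightarrow{a_x}>0$; $\ell=\overrightarrow{b_x}-1$ if $x[i]>x[i+1]$ and $\overrightarrow{b_x}>1$; $\ell=i$ otherwise. Index ranges $\{a,\ldots,b\}$ with $a>b$ are empty. *)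

From mathcomp Require Import all_boot all_order all_algebra.
Set Implicit Arguments. Unset Strict Implicit. Unset Printing Implicit Defensive.
Import Order.TTheory GRing.Theory Num.Theory.

(* Sequences of pairwise distinct integers, indexed from 1:
   x[k] := nth 0 x (k-1), for 1 <= k <= size x. *)
Definition at1 (x : seq int) (k : nat) : int := nth 0%R x k.-1.

(* tau(x,i): exchange x[i] and x[i+1] (1-indexed). *)
Definition tau (x : seq int) (i : nat) : seq int :=
  set_nth 0%R (set_nth 0%R x i.-1 (at1 x i.+1)) i (at1 x i).

(* Forward parent distance: k - max{ j < k : x[j] < x[k] } (j >= 1), or 0. *)
Definition fpd (x : seq int) (k : nat) : nat :=
  let s := [seq j <- iota 1 k.-1 | (at1 x j < at1 x k)%R] in
  if s is [::] then 0 else k - last 0 s.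

(* Reverse parent distance: min{ j : k < j <= n, x[j] < x[k] } - k, or 0. *)
Definition rpd (x : seq int) (k : nat) : nat :=
  let s := [seq j <- iota k.+1 (size x - k) | (at1 x j < at1 x k)%R] in
  if s is j :: _ then j - k else 0.

Definition r_of (x : seq int) (i : nat) : nat :=
  let n := size x in
  if (at1 x i < at1 x i.+1)%R && (1 < rpd x i) then rpd x i
  else if (at1 x i.+1 < at1 x i)%R && (0 < rpd x i.+1) then (rpd x i.+1).+1
  else n - i + 1.

Definition l_of (x : seq int) (i : nat) : nat :=
  if (at1 x i < at1 x i.+1)%R && (0 < fpd x i) then fpd x i
  else if (at1 x i.+1 < at1 x i)%R && (1 < fpd x i.+1) then (fpd x i.+1).-1
  else i.

From mathcomp Require Import all_boot all_order all_algebra zify.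
Import Order.TTheory GRing.Theory Num.Theory.

Set Implicit Arguments.
Unset Strict Implicit.

(* For j > i+1, the positions left of j holding a value smaller than x[j] are
   the same for x and y = tau x i outside the slots i, i+1, whose values are
   exchanged.  So PD_y[j] and PD_x[j] differ by at most one, and only when
   exactly one of x[i], x[i+1] is smaller than x[j]; which one fixes the sign.
   The reverse table at j < i is symmetric.  The windows R and L are ranges in
   which no entry is smaller than min(x[i], x[i+1]); the entries being distinct,
   that minimum is smaller than x[j] there, leaving a single direction. *)

Lemma at1_tau_i (x : seq int) i : 0 < i < size x -> at1 (tau x i) i = at1 x i.+1.
Proof.
move=> i_bd; rewrite /at1 /tau nth_set_nth /= ifN; last by apply/eqP; lia.
by rewrite nth_set_nth /= eqxx.
Qed.

Lemma at1_tau_iS (x : seq int) i : at1 (tau x i) i.+1 = at1 x i.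
Proof. by rewrite /at1 /tau nth_set_nth /= eqxx. Qed.

Lemma at1_tau_out (x : seq int) i k :
  0 < k -> k != i -> k != i.+1 -> at1 (tau x i) k = at1 x k.
Proof.
move=> k_gt0 k_i k_iS; rewrite /at1 /tau nth_set_nth /= ifN; last by apply/eqP; lia.
by rewrite nth_set_nth /= ifN //; apply/eqP; lia.
Qed.

Lemma size_tau (x : seq int) i : 0 < i < size x -> size (tau x i) = size x.
Proof. by move=> i_bd; rewrite /tau !size_set_nth; lia. Qed.

Lemma filter_tau_out (x : seq int) i (s : seq nat) (c : int) :
  all [pred k | [&& 0 < k, k != i & k != i.+1]] s ->
  [seq k <- s | (at1 (tau x i) k < c)%R] = [seq k <- s | (at1 x k < c)%R].
Proof.
by move/allP=> s_out; apply: eq_in_filter => k /s_out/and3P[*]; rewrite at1_tau_out.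
Qed.

Lemma at1_gtNlt (x : seq int) p q : uniq x ->
  0 < p <= size x -> 0 < q <= size x -> p != q ->
  ~~ (at1 x p < at1 x q)%R -> (at1 x q < at1 x p)%R.
Proof.
move=> x_uniq p_bd q_bd p_q; rewrite -leNgt lt_neqAle => ->; rewrite andbT.
have [p_lt q_lt] : p.-1 < size x /\ q.-1 < size x by lia.
by rewrite /at1 nth_uniq //; lia.
Qed.

Lemma sorted_leq_head (d m : nat) s : sorted leq s -> m \in s -> head d s <= m.
Proof.
case: s => [|h t] //= /(order_path_min leq_trans)/allP h_le.
by rewrite inE => /predU1P[->|/h_le].
Qed.

Lemma sorted_leq_last (d m : nat) s : sorted leq s -> m \in s -> m <= last d s.
Proof.
elim: s d => [|h t IHt] d //= h_path.
rewrite inE => /predU1P[->|m_t]; last exact: IHt (path_sorted h_path) m_t.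
have /allP h_le := order_path_min leq_trans h_path.
by have := mem_last h t; rewrite inE => /predU1P[->|/h_le].
Qed.

Definition smaller_before (x : seq int) (k : nat) : seq nat :=
  [seq j <- iota 1 k.-1 | (at1 x j < at1 x k)%R].

Definition smaller_after (x : seq int) (k : nat) : seq nat :=
  [seq j <- iota k.+1 (size x - k) | (at1 x j < at1 x k)%R].

Lemma mem_smaller_before (x : seq int) k m :
  (m \in smaller_before x k) = (0 < m < k) && (at1 x m < at1 x k)%R.
Proof. by rewrite mem_filter mem_iota andbC; congr andb; lia. Qed.

Lemma mem_smaller_after (x : seq int) k m :
  (m \in smaller_after x k) = (k < m <= size x) && (at1 x m < at1 x k)%R.
Proof. by rewrite mem_filter mem_iota andbC; congr andb; lia. Qed.

(* With default [k], an empty list of candidates gives [k - k = 0]. *)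
Lemma fpdE (x : seq int) k : fpd x k = k - last k (smaller_before x k).
Proof.
by rewrite /fpd -/(smaller_before x k); case: smaller_before => //=; rewrite subnn.
Qed.

Lemma rpdE (x : seq int) k : rpd x k = head k (smaller_after x k) - k.
Proof.
by rewrite /rpd -/(smaller_after x k); case: smaller_after => //=; rewrite subnn.
Qed.

Lemma sorted_smaller_before (x : seq int) k : sorted leq (smaller_before x k).
Proof. exact/sorted_filter/iota_sorted/leq_trans. Qed.

Lemma sorted_smaller_after (x : seq int) k : sorted leq (smaller_after x k).
Proof. exact/sorted_filter/iota_sorted/leq_trans. Qed.

Lemma fpd_parent (x : seq int) k :
  0 < fpd x k -> (at1 x (k - fpd x k) < at1 x k)%R.
Proof.
rewrite fpdE; case Es: (smaller_before x k) => [|h t] /=; first by rewrite subnn.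
have /[!mem_smaller_before] /andP[p_bd lt_p] : last h t \in smaller_before x k.
  by rewrite Es mem_last.
by move=> _; rewrite subKn // ltnW; case/andP: p_bd.
Qed.

Lemma fpd_gap (x : seq int) k m : 0 < m < k ->
  (fpd x k == 0) || (k - fpd x k < m) -> ~~ (at1 x m < at1 x k)%R.
Proof.
move=> m_bd; apply: contraTN => lt_m.
have m_in : m \in smaller_before x k by rewrite mem_smaller_before m_bd.
have m_le : m <= last k (smaller_before x k).
  exact: sorted_leq_last (sorted_smaller_before x k) m_in.
rewrite fpdE; case Es: (smaller_before x k) m_in m_le => [//|h t] _ /= m_le.
have /[!mem_smaller_before] /andP[p_bd _] : last h t \in smaller_before x k.
  by rewrite Es mem_last.
lia.
Qed.

Lemma rpd_parent (x : seq int) k : 0 < rpd x k ->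
  k + rpd x k <= size x /\ (at1 x (k + rpd x k) < at1 x k)%R.
Proof.
rewrite rpdE; case Es: (smaller_after x k) => [|h t] /=; first by rewrite subnn.
have /[!mem_smaller_after] /andP[/andP[k_h h_le] lt_h] : h \in smaller_after x k.
  by rewrite Es mem_head.
by move=> _; rewrite subnKC // ltnW.
Qed.

Lemma rpd_gap (x : seq int) k m : k < m <= size x ->
  (rpd x k == 0) || (m < k + rpd x k) -> ~~ (at1 x m < at1 x k)%R.
Proof.
move=> m_bd; apply: contraTN => lt_m.
have m_in : m \in smaller_after x k by rewrite mem_smaller_after m_bd.
have le_m : head k (smaller_after x k) <= m.
  exact: sorted_leq_head (sorted_smaller_after x k) m_in.
rewrite rpdE; case Es: (smaller_after x k) m_in le_m => [//|h t] _ /= le_m.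
have /[!mem_smaller_after] /andP[h_bd _] : h \in smaller_after x k.
  by rewrite Es mem_head.
lia.
Qed.

Lemma fpd_tau (x : seq int) i j : 0 < i < size x -> i.+1 < j ->
  fpd x j - ((at1 x i < at1 x j)%R && ~~ (at1 x i.+1 < at1 x j)%R)
  <= fpd (tau x i) j <=
  fpd x j + (~~ (at1 x i < at1 x j)%R && (at1 x i.+1 < at1 x j)%R).
Proof.
move=> i_bd i_j.
have iota_j : iota 1 j.-1 = iota 1 i.-1 ++ [:: i; i.+1] ++ iota i.+2 (j - i.+2).
  have -> : j.-1 = i.-1 + (2 + (j - i.+2)) by lia.
  by rewrite !iotaD add1n prednK; [rewrite addn2 | lia].
rewrite !fpdE /smaller_before iota_j !filter_cat at1_tau_out; try lia.
rewrite !(@filter_tau_out _ _ (iota _ _));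
  try by apply/allP => k; rewrite mem_iota /=; lia.
rewrite /= at1_tau_i // at1_tau_iS !last_cat.
case: (at1 x i < _)%R; case: (at1 x i.+1 < _)%R;
  case: (filter _ (iota i.+2 _)) => [|k s] /=; lia.
Qed.

Lemma rpd_tau (x : seq int) i j : 0 < j < i -> i < size x ->
  rpd x j - (~~ (at1 x i < at1 x j)%R && (at1 x i.+1 < at1 x j)%R)
  <= rpd (tau x i) j <=
  rpd x j + ((at1 x i < at1 x j)%R && ~~ (at1 x i.+1 < at1 x j)%R).
Proof.
move=> j_bd i_lt.
have iota_j : iota j.+1 (size x - j) =
    iota j.+1 (i - j.+1) ++ [:: i; i.+1] ++ iota i.+2 (size x - i.+1).
  have -> : size x - j = i - j.+1 + (2 + (size x - i.+1)) by lia.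
  by rewrite !iotaD subnKC; [rewrite addn2 | lia].
rewrite !rpdE /smaller_after size_tau; last by lia.
rewrite iota_j !filter_cat at1_tau_out; try lia.
rewrite !(@filter_tau_out _ _ (iota _ _));
  try by apply/allP => k; rewrite mem_iota /=; lia.
rewrite /= at1_tau_i ?at1_tau_iS; last by lia.
case: (at1 x i < _)%R; case: (at1 x i.+1 < _)%R;
  case: (filter _ (iota j.+1 _)) => [|k s] /=; lia.
Qed.

Lemma r_of_window_lt (x : seq int) i j : (at1 x i < at1 x i.+1)%R ->
  i.+1 < j < i + r_of x i -> j <= size x /\ ~~ (at1 x j < at1 x i)%R.
Proof.
move=> lt_i; have gt_iF : (at1 x i.+1 < at1 x i)%R = false by rewrite ltNge ltW.
rewrite /r_of lt_i gt_iF /=; case: ifP => [r_gt1 | /negbT r_le1] j_bd.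
  have [r_sz _] := rpd_parent (ltnW r_gt1).
  by split; [lia | apply: rpd_gap; lia].
have r0 : rpd x i = 0.
  case: (posnP (rpd x i)) => // r_gt0; have [_] := rpd_parent r_gt0.
  have -> : i + rpd x i = i.+1 by lia.
  by rewrite gt_iF.
by split; [lia | apply: rpd_gap; lia].
Qed.

Lemma r_of_window_gt (x : seq int) i j : (at1 x i.+1 < at1 x i)%R ->
  i.+1 < j < i + r_of x i -> j <= size x /\ ~~ (at1 x j < at1 x i.+1)%R.
Proof.
move=> gt_i; have lt_iF : (at1 x i < at1 x i.+1)%R = false by rewrite ltNge ltW.
rewrite /r_of lt_iF gt_i /=; case: ifP => [r_gt0 | /negbT r_le0] j_bd.
  have [r_sz _] := rpd_parent r_gt0.
  by split; [lia | apply: rpd_gap; lia].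
by split; [lia | apply: rpd_gap; lia].
Qed.

Lemma l_of_window_lt (x : seq int) i j : (at1 x i < at1 x i.+1)%R ->
  i - l_of x i < j < i -> ~~ (at1 x j < at1 x i)%R.
Proof.
move=> lt_i; have gt_iF : (at1 x i.+1 < at1 x i)%R = false by rewrite ltNge ltW.
by rewrite /l_of lt_i gt_iF /=; case: ifP => l_gt0 j_bd; apply: fpd_gap; lia.
Qed.

Lemma l_of_window_gt (x : seq int) i j : (at1 x i.+1 < at1 x i)%R ->
  i - l_of x i < j < i -> ~~ (at1 x j < at1 x i.+1)%R.
Proof.
move=> gt_i; have lt_iF : (at1 x i < at1 x i.+1)%R = false by rewrite ltNge ltW.
rewrite /l_of lt_iF gt_i /=; case: ifP => [l_gt1 | /negbT l_le1] j_bd.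
  by apply: fpd_gap; lia.
have l0 : fpd x i.+1 = 0.
  case: (posnP (fpd x i.+1)) => // l_gt0; have := fpd_parent l_gt0.
  have -> : i.+1 - fpd x i.+1 = i by lia.
  by rewrite lt_iF.
by apply: fpd_gap; lia.
Qed.
Theorem lemma5 (x : seq int) (i : nat) :
  uniq x -> 1 <= i -> i <= (size x).-1 ->
  let y := tau x i in
  let r := r_of x i in
  let l := l_of x i in
  ((at1 x i < at1 x i.+1)%R ->
     (forall j, i + 2 <= j <= i + r - 1 ->
        fpd y j = fpd x j \/ fpd y j = (fpd x j).-1) /\
     (forall j, i - l + 1 <= j <= i - 1 ->
        rpd y j = rpd x j \/ rpd y j = (rpd x j).+1)) /\
  ((at1 x i.+1 < at1 x i)%R ->
     (forall j, i + 2 <= j <= i + r - 1 ->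
        fpd y j = fpd x j \/ fpd y j = (fpd x j).+1) /\
     (forall j, i - l + 1 <= j <= i - 1 ->
        rpd y j = rpd x j \/ rpd y j = (rpd x j).-1)).
Proof.
move=> x_uniq i_gt0 i_lt /=; have i_bd : 0 < i < size x by lia.
split=> [lt_i | gt_i]; split=> j j_bd.
- have [j_sz nlt] : j <= size x /\ ~~ (at1 x j < at1 x i)%R.
    by apply: r_of_window_lt; lia.
  have lt_ij : (at1 x i < at1 x j)%R by apply: (at1_gtNlt x_uniq _ _ _ nlt); lia.
  have := @fpd_tau x i j i_bd; rewrite lt_ij /=; lia.
- have nlt : ~~ (at1 x j < at1 x i)%R by apply: l_of_window_lt; lia.
  have lt_ij : (at1 x i < at1 x j)%R by apply: (at1_gtNlt x_uniq _ _ _ nlt); lia.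
  have := @rpd_tau x i j; rewrite lt_ij /=; lia.
- have [j_sz nlt] : j <= size x /\ ~~ (at1 x j < at1 x i.+1)%R.
    by apply: r_of_window_gt; lia.
  have lt_ij : (at1 x i.+1 < at1 x j)%R by apply: (at1_gtNlt x_uniq _ _ _ nlt); lia.
  have := @fpd_tau x i j i_bd; rewrite lt_ij /= andbT; lia.
- have nlt : ~~ (at1 x j < at1 x i.+1)%R by apply: l_of_window_gt; lia.
  have lt_ij : (at1 x i.+1 < at1 x j)%R by apply: (at1_gtNlt x_uniq _ _ _ nlt); lia.
  have := @rpd_tau x i j; rewrite lt_ij /= andbT; lia.
Qed.
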